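(* For every $t\ge0$, $k\ge1$, every collection $\Omega$ of functions and every collection $\Theta$ of aggregation functions: (1) $\rho_1\bigl(\mathsf{cr}^{(t)}\bigr)\subseteq\rho_1\bigl(\mathsf{GTL}_2^{(t)}(\Omega,\Theta)\bigr)$; (2) $\rho_1\bigl(\mathsf{vwl}_k^{(t)}\bigr)\subseteq\rho_1\bigl(\mathsf{TL}_{k+1}^{(t)}(\Omega,\Theta)\bigr)$; (3) $\rho_0\bigl(\mathsf{gwl}_k^{(t)}\bigr)\subseteq\rho_0\bigl(\mathsf{TL}_{k+1}^{(t+1)}(\Omega,\Theta)\bigr)$.
   Context: Fix integers $n\ge1$, $\ell\ge1$. A graph is $G=(V_G,E_G,\mathrm{col}_G)$ with $V_G=[n]$, $E_G$ a set of unordered pairs of distinct vertices, $\mathrm{col}_G:V_G\to\mathbb R^\ell$; $N_G(v)=\{u:uv\in E_G\}$. Extended tensor language $\mathsf{TL}(\Omega,\Theta)$: $\Omega$ is a collection of functions $f:\mathbb R^p\to\mathbb R$; $\Theta$ a collection of aggregation functions $F$, each assigning a real number to every finite multiset of reals. Expressions: $\varphi::=\mathbf 1_{x=y}\mid \mathbf 1_{x\neq y}\mid E(x,y)\mid P_s(x)\mid \varphi\cdot\varphi\mid \varphi+\varphi\mid a\cdot\varphi\mid f(\varphi_1,\dots,\varphi_p)\mid \sum_x\varphi\mid \mathrm{aggr}^F_{x_j}(\varphi)\mid\mathrm{aggr}^F_{x_j}(\varphi\mid E(x_i,x_j))$ with $F\in\Theta$, where in the last construct $\varphi$ has no free variable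 other than $x_j$. Free variables as usual, with $\mathrm{free}(\mathrm{aggr}^F_{x_j}(\varphi))=\mathrm{free}(\varphi)\setminus\{x_j\}$ and $\mathrm{free}(\mathrm{aggr}^F_{x_j}(\varphi\mid E(x_i,x_j)))=\{x_i\}$. Semantics: $E$ adjacency indicator, $P_s(x)=\mathrm{col}_G(\nu(x))_s$, $\mathbf 1_{x\,\mathrm{op}\,y}$ (dis)equality indicator, $\cdot,+,a\cdot,f$ pointwise, $[\![\sum_x\varphi]\!]^\nu_G=\sum_{v\in V_G}[\![\varphi]\!]^{\nu[x\mapsto v]}_G$, $[\![\mathrm{aggr}^F_{x_j}(\varphi)]\!]^\nu_G=F(\{\!\{[\![\varphi]\!]^{\nu[x_j\mapsto v]}_G:v\in V_G\}\!\})$, $[\![\mathrm{aggr}^F_{x_j}(\varphi\mid E(x_i,x_j))]\!]^\nu_G=F(\{\!\{[\![\varphi]\!]^{\nu[x_j\mapsto v]}_G:v\in N_G(\nu(x_i))\}\!\})$. Aggregation depth: $0$ for atoms, max for $\cdot,+,f(\dots)$, unchanged by $a\cdot$, and $+1$ for $\sum_x$ and both aggregation constructs. $\mathsf{TL}_{k}^{(t)}(\Omega,\Theta)$: expressions using only variables $x_1,\dots,x_k$ (re-binding allowed) with aggregation depth $\le t$. Guarded fragment $\mathsf{GTL}_2(\Omega,\Theta)$: expressions with exactly one free variable ($x_1$ or $x_2$), built from $\mathbf 1_{x_i=x_i}$, $\mathbf 1_{x_i\ne x_i}$, $P_s(x_i)$ by $\cdot$, $+$ of expressions with the same single free variable,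 $a\cdot$, $f(\varphi_1,\dots,\varphi_p)$ with all $\varphi_j$ sharing the same single free variable, $\sum_{x_j}(E(x_i,x_j)\cdot\varphi)$ and $\mathrm{aggr}^F_{x_j}(\varphi\mid E(x_i,x_j))$ with $\{i,j\}=\{1,2\}$ and $\varphi$ with free variable $x_j$; $\mathsf{GTL}_2^{(t)}(\Omega,\Theta)$ those of aggregation depth $\le t$. For a set $\mathcal L$ of expressions, $\rho_1(\mathcal L)$ is the set of pairs $((G,v),(H,w))$ with $[\![\varphi]\!]^{x_1\mapsto v}_G=[\![\varphi]\!]^{x_1\mapsto w}_H$ for all $\varphi\in\mathcal L$ with free variables among $\{x_1\}$; $\rho_0(\mathcal L)$ the set of pairs of graphs agreeing on all closed expressions of $\mathcal L$. Color refinement: $\mathsf{cr}^{(0)}(G,v)=\mathrm{col}_G(v)$, $\mathsf{cr}^{(t+1)}(G,v)=(\mathsf{cr}^{(t)}(G,v),\{\!\{\mathsf{cr}^{(t)}(G,u):u\in N_G(v)\}\!\})$. $k$-WL: $\mathsf{atp}_k(G,\mathbf v)$ records for $i<j$ whether $v_i=v_j$ and whether $v_iv_j\in E_G$, and all $\mathrm{col}_G(v_i)$; $\mathsf{wl}_k^{(0)}=\mathsf{atp}_k$, $\mathsf{wl}_k^{(t+1)}(G,\mathbf v)=(\mathsf{wl}_k^{(t)}(G,\mathbf v),\{\!\{(\mathsf{atp}_{k+1}(G,(v_1,\dots,v_k,u)),\mathsf{wl}_k^{(t)}(G,\mathbf v[u/1]),\dots,\mathsf{wl}_k^{(t)}(G,\mathbf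 v[u/k])):u\in V_G\}\!\})$ ($\mathbf v[u/i]$ replaces the $i$-th entry by $u$); $\mathsf{vwl}_k^{(t)}(G,v)=\mathsf{wl}_k^{(t)}(G,(v,\dots,v))$; $\mathsf{gwl}_k^{(t)}(G)=\{\!\{\mathsf{wl}_k^{(t)}(G,\mathbf v):\mathbf v\in V_G^k\}\!\}$. Labels compared as formal objects; $\rho_1(\mathsf{cr}^{(t)})$, $\rho_1(\mathsf{vwl}_k^{(t)})$, $\rho_0(\mathsf{gwl}_k^{(t)})$ are the pairs with equal labels. *)

From Stdlib Require Import Reals.
From HB Require Import structures.
From mathcomp Require Import all_boot all_order.
From mathcomp Require Import finmap multiset.
From mathcomp Require Import Rstruct.

Set Implicit Arguments.
Unset Strict Implicit.
Unset Printing Implicit Defensive.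
Open Scope mset_scope.
Open Scope nat_scope.

Record graph (n l : nat) := Graph {
  adj : rel 'I_n;
  adj_sym : symmetric adj;
  adj_irr : irreflexive adj;
  col : 'I_n -> {ffun 'I_l -> R}
}.

Definition rmset := {mset R}.

Section TL.
Variable l : nat.

(* Variables are natural numbers; x_i is represented by i (paper: x_1, x_2, ...). *)
Inductive expr :=
| EEq   (i j : nat)
| ENeq  (i j : nat)
| EE    (i j : nat)
| EP    (s : 'I_l) (i : nat)
| EMul  (e1 e2 : expr)
| EAdd  (e1 e2 : expr)
| EScale (a : R) (e : expr)
| EApp  (p : nat) (f : ('I_p -> R) -> R) (args : 'I_p -> expr)
| ESum  (x : nat) (e : expr)
| EAggr (F : rmset -> R) (j : nat) (e : expr)
| EAggrN (F : rmset -> R) (i j : nat) (e : expr).    (* aggr^F_{x_j}(e | E(x_i,x_j)) *)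

Fixpoint free (e : expr) (x : nat) : bool :=
  match e with
  | EEq i j | ENeq i j | EE i j => (x == i) || (x == j)
  | EP _ i => x == i
  | EMul a b | EAdd a b => free a x || free b x
  | EScale _ a => free a x
  | EApp p _ args => [exists m : 'I_p, free (args m) x]
  | ESum y a => (x != y) && free a x
  | EAggr _ j a => (x != j) && free a x
  | EAggrN _ i _ _ => x == i
  end.

Fixpoint vars_in (k : nat) (e : expr) : bool :=
  let ok i := (0 < i <= k) in
  match e with
  | EEq i j | ENeq i j | EE i j => ok i && ok j
  | EP _ i => ok i
  | EMul a b | EAdd a b => vars_in k a && vars_in k b
  | EScale _ a => vars_in k a
  | EApp p _ args => [forall m : 'I_p, vars_in k (args m)]
  | ESum y a => ok y && vars_in k a
  | EAggr _ j a => ok j && vars_in k a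
  | EAggrN _ i j a => [&& ok i, ok j & vars_in k a]
  end.

Fixpoint depth (e : expr) : nat :=
  match e with
  | EEq _ _ | ENeq _ _ | EE _ _ | EP _ _ => 0
  | EMul a b | EAdd a b => maxn (depth a) (depth b)
  | EScale _ a => depth a
  | EApp p _ args => \max_(m < p) depth (args m)
  | ESum _ a | EAggr _ _ a | EAggrN _ _ _ a => (depth a).+1
  end.

Fixpoint in_TL (Omega : forall p : nat, (('I_p -> R) -> R) -> Prop)
    (Theta : (rmset -> R) -> Prop) (e : expr) : Prop :=
  match e with
  | EEq _ _ | ENeq _ _ | EE _ _ | EP _ _ => True
  | EMul a b | EAdd a b => in_TL Omega Theta a /\ in_TL Omega Theta b
  | EScale _ a => in_TL Omega Theta a
  | EApp p f args => Omega p f /\ forall m : 'I_p, in_TL Omega Theta (args m)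
  | ESum _ a => in_TL Omega Theta a
  | EAggr F _ a => Theta F /\ in_TL Omega Theta a
  | EAggrN F _ j a => Theta F /\ (forall x, free a x -> x = j) /\ in_TL Omega Theta a
  end.

Definition TL (Omega : forall p : nat, (('I_p -> R) -> R) -> Prop)
    (Theta : (rmset -> R) -> Prop) (k t : nat) (e : expr) : Prop :=
  in_TL Omega Theta e /\ vars_in k e /\ (depth e <= t)%N.

(* Guarded fragment GTL_2(Omega, Theta): gtl i e means e is a guarded
   expression whose single free variable is x_i (i in {1,2}). *)
Inductive gtl (Omega : forall p : nat, (('I_p -> R) -> R) -> Prop)
    (Theta : (rmset -> R) -> Prop) : nat -> expr -> Prop :=
| gtl_eq i : (i == 1) || (i == 2) -> gtl Omega Theta i (EEq i i)
| gtl_neq i : (i == 1) || (i == 2) -> gtl Omega Theta i (ENeq i i)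
| gtl_P s i : (i == 1) || (i == 2) -> gtl Omega Theta i (EP s i)
| gtl_mul i a b : gtl Omega Theta i a -> gtl Omega Theta i b -> gtl Omega Theta i (EMul a b)
| gtl_add i a b : gtl Omega Theta i a -> gtl Omega Theta i b -> gtl Omega Theta i (EAdd a b)
| gtl_scale i c a : gtl Omega Theta i a -> gtl Omega Theta i (EScale c a)
| gtl_app i p f args : (0 < p)%N -> Omega p f ->
    (forall m : 'I_p, gtl Omega Theta i (args m)) -> gtl Omega Theta i (EApp f args)
| gtl_sum i j a : ((i == 1) && (j == 2)) || ((i == 2) && (j == 1)) ->
    gtl Omega Theta j a -> gtl Omega Theta i (ESum j (EMul (EE i j) a))
| gtl_aggr i j F a : ((i == 1) && (j == 2)) || ((i == 2) && (j == 1)) ->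
    Theta F -> gtl Omega Theta j a -> gtl Omega Theta i (EAggrN F i j a).

Definition GTL2 Omega Theta (t : nat) (e : expr) : Prop :=
  exists i, gtl Omega Theta i e /\ (depth e <= t)%N.

End TL.

Section Semantics.
Variables n l : nat.
Implicit Types (G : graph n l).

Definition upd (nu : nat -> 'I_n) (x : nat) (v : 'I_n) : nat -> 'I_n :=
  fun y => if y == x then v else nu y.

Definition ind (b : bool) : R := if b then R1 else R0.

Fixpoint eval G (nu : nat -> 'I_n) (e : expr l) : R :=
  match e with
  | EEq i j => ind (nu i == nu j)
  | ENeq i j => ind (nu i != nu j)
  | EE i j => ind (adj G (nu i) (nu j))
  | EP s i => col G (nu i) s
  | EMul a b => Rmult (eval G nu a) (eval G nu b)
  | EAdd a b => Rplus (eval G nu a) (eval G nu b)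
  | EScale c a => Rmult c (eval G nu a)
  | EApp p f args => f (fun m => eval G nu (args m))
  | ESum x a => \big[Rplus/R0]_(v : 'I_n) eval G (upd nu x v) a
  | EAggr F j a => F (seq_mset [seq eval G (upd nu j v) a | v : 'I_n])
  | EAggrN F i j a =>
      F (seq_mset [seq eval G (upd nu j v) a | v <- enum 'I_n & adj G (nu i) v])
  end.

Definition rho1 (L : expr l -> Prop) G (v : 'I_n) H (w : 'I_n) : Prop :=
  forall phi, L phi -> (forall x, free phi x -> x = 1%N) ->
  forall nuG nuH : nat -> 'I_n, nuG 1%N = v -> nuH 1%N = w ->
  eval G nuG phi = eval H nuH phi.

Definition rho0 (L : expr l -> Prop) G H : Prop :=
  forall phi, L phi -> (forall x, ~~ free phi x) ->
  forall nuG nuH : nat -> 'I_n, eval G nuG phi = eval H nuH phi.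

Fixpoint crT (t : nat) : choiceType :=
  match t with
  | 0 => {ffun 'I_l -> R}
  | t'.+1 => (crT t' * {mset crT t'})%type
  end.

Fixpoint cr G (t : nat) (v : 'I_n) : crT t :=
  match t as t0 return crT t0 with
  | 0 => col G v
  | t'.+1 => (cr G t' v, seq_mset [seq cr G t' u | u <- enum 'I_n & adj G v u])
  end.

(* atomic type of a tuple (v_1..v_m): for i < j, whether v_i = v_j and
   whether v_i v_j is an edge (entries with i >= j are a dummy value),
   and the colours of all v_i. *)
Definition atpT (m : nat) : choiceType :=
  ({ffun 'I_m * 'I_m -> bool * bool} * {ffun 'I_m -> {ffun 'I_l -> R}})%type.

Definition atp G (m : nat) (vs : 'I_m -> 'I_n) : atpT m :=
  ([ffun ij : 'I_m * 'I_m =>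
      if (ij.1 < ij.2)%N then (vs ij.1 == vs ij.2, adj G (vs ij.1) (vs ij.2))
      else (false, false)],
   [ffun i => col G (vs i)]).

(* (v_1, ..., v_k, u) *)
Definition ext (k : nat) (vs : {ffun 'I_k -> 'I_n}) (u : 'I_n) : 'I_k.+1 -> 'I_n :=
  fun i => if insub (val i) : option 'I_k is Some j then vs j else u.

Definition repl (k : nat) (vs : {ffun 'I_k -> 'I_n}) (u : 'I_n) (i : 'I_k)
  : {ffun 'I_k -> 'I_n} := [ffun j => if j == i then u else vs j].

Fixpoint wlT (k t : nat) : choiceType :=
  match t with
  | 0 => atpT k
  | t'.+1 => (wlT k t' * {mset (atpT k.+1 * {ffun 'I_k -> wlT k t'})})%type
  end.

Fixpoint wl G (k t : nat) (vs : {ffun 'I_k -> 'I_n}) : wlT k t :=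
  match t as t0 return wlT k t0 with
  | 0 => atp G vs
  | t'.+1 => (wl G t' vs,
              seq_mset [seq (atp G (ext vs u), [ffun i => wl G t' (repl vs u i)])
                       | u : 'I_n])
  end.

Definition vwl G (k t : nat) (v : 'I_n) : wlT k t := wl G t [ffun _ => v].

Definition gwl G (k t : nat) : {mset wlT k t} :=
  seq_mset [seq wl G t vs | vs : {ffun 'I_k -> 'I_n}].

End Semantics.

From Stdlib Require Import Reals FunctionalExtensionality.
From mathcomp Require Import all_boot finmap multiset Rstruct fingroup perm.

(* For k-WL the invariant concerns a
   (k+1)-tuple of vertices into which the free variables of the expression point: if the
   atomic types of two such tuples agree, and so do the depth-d WL colours of the k-tuples
   obtained by deleting any one entry, then every TL_{k+1} expression of depth at most d
   takes the same value on them. When an aggregation binds x_j, the other variables occupy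
   at most k entries, so some entry can be deleted; the depth-(d+1) colour of the remaining
   k-tuple records the multiset of atomic types and refined colours of all its extensions
   by one vertex, which is exactly what the aggregation over x_j reads. Colour refinement is
   the same argument with single vertices along the guarded fragment. A closed expression of
   depth t+1 aggregates one-variable expressions of depth t, whose values depend only on
   the colours vwl; their multiset is determined by gwl because diagonal tuples are
   recognised by their atomic type. *)

Set Implicit Arguments.
Unset Strict Implicit.
Unset Printing Implicit Defensive.

Lemma exists_notin (T : finType) (s : seq T) : size s < #|T| -> exists x : T, x \notin s.
Proof.
move=> small; case: (pickP [pred x | x \notin s]) => [x sx|all_in]; first by exists x.
suff : #|T| <= size s by rewrite leqNgt small.
apply: leq_trans (card_size s); apply/subset_leq_card/subsetP => x _.
by have /negbFE := all_in x.
Qed.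

Lemma perm_map_filter_of_keys (A B K V : eqType) (keyA : A -> K) (keyB : B -> K)
    (pA : pred A) (pB : pred B) (fA : A -> V) (fB : B -> V) (sA : seq A) (sB : seq B) :
  (forall a b, keyA a = keyB b -> pA a = pB b /\ (pA a -> fA a = fB b)) ->
  perm_eq (map keyA sA) (map keyB sB) ->
  perm_eq (map fA (filter pA sA)) (map fB (filter pB sB)).
Proof.
move=> keyE; elim: sA sB => [|a sA IH] sB /=.
  by move/perm_size; rewrite size_map; case: sB.
move=> perm_keys; have : keyA a \in map keyB sB by rewrite -(perm_mem perm_keys) mem_head.
case/mapP => b b_in ab.
have perm_sB := perm_to_rem b_in.
have perm_rest : perm_eq (map keyA sA) (map keyB (rem b sB)).
  by rewrite -(perm_cons (keyA a)) ab -map_cons -ab (perm_trans perm_keys) ?perm_map.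
have [pab fab] := keyE _ _ ab.
rewrite perm_sym (perm_trans (perm_map fB (perm_filter pB perm_sB))) // perm_sym /=.
rewrite pab; case: ifP => pb /=; last exact: IH.
by rewrite fab ?pab // perm_cons; exact: IH.
Qed.

Lemma perm_map_of_keys (A B K V : eqType) (keyA : A -> K) (keyB : B -> K)
    (fA : A -> V) (fB : B -> V) (sA : seq A) (sB : seq B) :
  (forall a b, keyA a = keyB b -> fA a = fB b) ->
  perm_eq (map keyA sA) (map keyB sB) -> perm_eq (map fA sA) (map fB sB).
Proof.
move=> keyE /(perm_map_filter_of_keys (pA := predT) (pB := predT) (fA := fA) (fB := fB)).
by rewrite !filter_predT; apply=> a b /keyE.
Qed.

Lemma eq_big_perm_map (T : eqType) (idx : T) (op : Monoid.com_law idx) (I : finType)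
    (P P' : pred I) (F F' : I -> T) :
  perm_eq (map F (filter P (enum I))) (map F' (filter P' (enum I))) ->
  \big[op/idx]_(i | P i) F i = \big[op/idx]_(i | P' i) F' i.
Proof.
have bigE Q G : \big[op/idx]_(i | Q i) G i = \big[op/idx]_(x <- map G (filter Q (enum I))) x.
  by rewrite big_map big_filter big_enum_cond.
by rewrite !bigE; apply: perm_big.
Qed.

Section AtomicTypes.
Variables n l : nat.
Implicit Types (G H : graph n l).

Lemma atp_eq_pair G H m (W W' : 'I_m -> 'I_n) a b : atp G W = atp H W' ->
  (W a == W b, adj G (W a) (W b)) = (W' a == W' b, adj H (W' a) (W' b)).
Proof.
case=> /ffunP types _; case: (ltngtP a b) => [ab|ba|/val_inj<-].
- by have := types (a, b); rewrite !ffunE /= ab.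
- have := types (b, a); rewrite !ffunE /= ba => -[eqE adjE].
  by rewrite eq_sym eqE eq_sym adj_sym adjE adj_sym.
- by rewrite !eqxx !adj_irr.
Qed.

Lemma atp_eq_vertex G H m (W W' : 'I_m -> 'I_n) a b : atp G W = atp H W' ->
  (W a == W b) = (W' a == W' b).
Proof. by move/(atp_eq_pair a b)/(congr1 fst). Qed.

Lemma atp_eq_adj G H m (W W' : 'I_m -> 'I_n) a b : atp G W = atp H W' ->
  adj G (W a) (W b) = adj H (W' a) (W' b).
Proof. by move/(atp_eq_pair a b)/(congr1 snd). Qed.

Lemma atp_eq_col G H m (W W' : 'I_m -> 'I_n) a : atp G W = atp H W' ->
  col G (W a) = col H (W' a).
Proof. by case=> _ /ffunP/(_ a); rewrite !ffunE. Qed.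

Lemma atp_const G m (W : 'I_m -> 'I_n) v : (forall a, W a = v) ->
  atp G W = ([ffun ij : 'I_m * 'I_m => (ij.1 < ij.2, false)], [ffun _ => col G v]).
Proof.
move=> Wv; congr pair; apply/ffunP => x; rewrite !ffunE !Wv //.
by rewrite eqxx adj_irr; case: ifP.
Qed.

Lemma cr_eq_col G H d v w : cr G d v = cr H d w -> col G v = col H w.
Proof. by elim: d => [//|d IH] [/IH]. Qed.

Lemma wl_eq_atp G H k d (vs vs' : {ffun 'I_k -> 'I_n}) :
  wl G d vs = wl H d vs' -> atp G vs = atp H vs'.
Proof. by elim: d => [//|d IH] [/IH]. Qed.

End AtomicTypes.

Section TupleSurgery.
Variables n k : nat.
Implicit Types (vs : {ffun 'I_k -> 'I_n}) (u v : 'I_n).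

(* The k-tuple left when entry p of the (k+1)-tuple [ext vs u] is deleted; the
   last entry u takes the vacated place. *)
Definition drop_entry vs u (p : 'I_k.+1) : {ffun 'I_k -> 'I_n} :=
  if insub (val p) : option 'I_k is Some q then repl vs u q else vs.

Lemma ext_max vs u : ext vs u ord_max = u.
Proof. by rewrite /ext insubF //= ltnn. Qed.

Lemma ext_lift vs u (q : 'I_k) : ext vs u (lift ord_max q) = vs q.
Proof. by rewrite /ext (_ : val _ = val q) ?valK //; apply: lift_max. Qed.

Lemma drop_entry_max vs u : drop_entry vs u ord_max = vs.
Proof. by rewrite /drop_entry insubF //= ltnn. Qed.

Lemma drop_entry_lift vs u (q : 'I_k) : drop_entry vs u (lift ord_max q) = repl vs u q.
Proof. by rewrite /drop_entry (_ : val _ = val q) ?valK //; apply: lift_max. Qed.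

Lemma ordS_cases (z : 'I_k.+1) : (exists q : 'I_k, z = lift ord_max q) \/ z = ord_max.
Proof. by case: (unliftP ord_max z) => [q ->|->]; [left; exists q | right]. Qed.

Lemma ext_drop_entry vs u p v z :
  ext (drop_entry vs u p) v (tperm p ord_max z) = if z == p then v else ext vs u z.
Proof.
case: (ordS_cases p) => [[q ->]|->].
  rewrite drop_entry_lift; case: (ordS_cases z) => [[j ->]|->].
    case: (eqVneq j q) => [->|jq]; first by rewrite tpermL eqxx ext_max.
    have qj : lift ord_max q != lift ord_max j by rewrite (inj_eq lift_inj) eq_sym.
    rewrite tpermD ?neq_lift // (inj_eq lift_inj) (negbTE jq) !ext_lift ffunE.
    by rewrite (negbTE jq).
  by rewrite tpermR ext_lift ffunE eqxx (negbTE (neq_lift _ _)) ext_max.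
rewrite tperm1 perm1 drop_entry_max; case: (ordS_cases z) => [[j ->]|->].
  by rewrite eq_sym (negbTE (neq_lift _ _)) !ext_lift.
by rewrite eqxx ext_max.
Qed.

Lemma ext_const v (z : 'I_k.+1) : ext [ffun _ => v] v z = v.
Proof. by case: (ordS_cases z) => [[q ->]|->]; rewrite ?ext_lift ?ffunE ?ext_max. Qed.

Lemma drop_entry_const v p : drop_entry [ffun _ => v] v p = [ffun _ => v].
Proof.
case: (ordS_cases p) => [[q ->]|->]; rewrite ?drop_entry_max // drop_entry_lift.
by apply/ffunP => j; rewrite !ffunE; case: ifP.
Qed.

End TupleSurgery.

Lemma vars_in_free l K (e : expr l) y : vars_in K e -> free e y -> 0 < y <= K.
Proof.
elim: e y => [i j|i j|i j|s i|a IHa b IHb|a IHa b IHb|c a IHa|p f args IH|x a IHa|F j a IHa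
  |F i j a IHa] y /=;
  try by move=> /andP[? ?] /orP[]/eqP->.
- by move=> ? /eqP->.
- by move=> /andP[Va Vb] /orP[/(IHa _ Va)|/(IHb _ Vb)].
- by move=> /andP[Va Vb] /orP[/(IHa _ Va)|/(IHb _ Vb)].
- exact: IHa.
- by move=> /forallP Va /existsP[m]; apply: IH.
- by move=> /andP[_ Va] /andP[_ /(IHa _ Va)].
- by move=> /andP[_ Va] /andP[_ /(IHa _ Va)].
- by move=> /and3P[? _ _] /eqP->.
Qed.

Lemma depth_EApp l p f (args : 'I_p -> expr l) m : depth (args m) <= depth (EApp f args).
Proof. exact: (leq_bigmax (F := fun m => depth (args m))). Qed.

Section WLInvariant.
Variables n l k : nat.
Hypothesis k_gt0 : 0 < k.
Implicit Types (G H : graph n l) (vs : {ffun 'I_k -> 'I_n}) (u v : 'I_n).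

Definition wl_label G d vs v := (atp G (ext vs v), [ffun i => wl G d (repl vs v i)]).

Lemma wl_succ_eq G H d vs vs' : wl G d.+1 vs = wl H d.+1 vs' ->
  wl G d vs = wl H d vs' /\
  perm_eq (map (wl_label G d vs) (enum 'I_n)) (map (wl_label H d vs') (enum 'I_n)).
Proof. by case=> -> /eq_seq_msetP. Qed.

Definition wl_agree d G vs u H vs' u' :=
  atp G (ext vs u) = atp H (ext vs' u') /\
  forall p, wl G d (drop_entry vs u p) = wl H d (drop_entry vs' u' p).

Lemma wl_agree_label d G H vs vs' v v' : wl G d vs = wl H d vs' ->
  wl_label G d vs v = wl_label H d vs' v' -> wl_agree d G vs v H vs' v'.
Proof.
move=> wlE /pair_equal_spec[atpE /ffunP replE]; split=> // p.
case: (ordS_cases p) => [[q ->]|->]; rewrite ?drop_entry_max //.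
by have := replE q; rewrite !ffunE !drop_entry_lift.
Qed.

Lemma wl_agree_drop_entry d G vs u H vs' u' p : wl_agree d.+1 G vs u H vs' u' ->
  perm_eq (map (wl_label G d (drop_entry vs u p)) (enum 'I_n))
          (map (wl_label H d (drop_entry vs' u' p)) (enum 'I_n)) /\
  forall v v', wl_label G d (drop_entry vs u p) v = wl_label H d (drop_entry vs' u' p) v' ->
    wl_agree d G (drop_entry vs u p) v H (drop_entry vs' u' p) v'.
Proof. by case=> _ /(_ p)/wl_succ_eq[wlE labelsE]; split=> // v v'; apply: wl_agree_label. Qed.

(* [sigma] tells which entry of the (k+1)-tuple each free variable of [e] denotes. *)
Definition wl_determined d (e : expr l) :=
  forall G H vs u vs' u' (sigma : nat -> 'I_k.+1) nuG nuH,
  wl_agree d G vs u H vs' u' ->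
  (forall x, free e x -> nuG x = ext vs u (sigma x) /\ nuH x = ext vs' u' (sigma x)) ->
  eval G nuG e = eval H nuH e.

Lemma wl_determined_sub d (a e : expr l) G H vs u vs' u' (sigma : nat -> 'I_k.+1) nuG nuH :
  wl_determined d a -> wl_agree d G vs u H vs' u' ->
  (forall x, free e x -> nuG x = ext vs u (sigma x) /\ nuH x = ext vs' u' (sigma x)) ->
  (forall x, free a x -> free e x) -> eval G nuG a = eval H nuH a.
Proof.
by move=> a_det agree points sub; apply: (a_det _ _ _ _ _ _ sigma _ _ agree) => x /sub/points.
Qed.

Lemma exists_unused_entry (sigma : nat -> 'I_k.+1) x : 0 < x <= k.+1 ->
  exists p, forall y, 0 < y <= k.+1 -> y != x -> sigma y != p.
Proof.
move=> x_in; have [|p p_fresh] := @exists_notin _ (map sigma (rem x (iota 1 k.+1))).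
  by rewrite size_map size_rem ?size_iota ?card_ord // mem_iota add1n ltnS.
exists p => y y_in yx; apply: contraNneq p_fresh => <-; apply: map_f.
by rewrite mem_rem_uniq ?iota_uniq // inE yx mem_iota add1n ltnS.
Qed.

Lemma upd_ext_drop_entry (nu : nat -> 'I_n) vs u (sigma : nat -> 'I_k.+1) x p v y :
  (y != x -> nu y = ext vs u (sigma y)) -> (y != x -> sigma y != p) ->
  upd nu x v y =
    ext (drop_entry vs u p) v (if y == x then ord_max else tperm p ord_max (sigma y)).
Proof.
move=> nuE unused; rewrite /upd; case: eqP => [_|/eqP yx]; first by rewrite ext_max.
by rewrite ext_drop_entry (negbTE (unused yx)) nuE.
Qed.

Lemma wl_determined_bind d x a G H vs u vs' u' (sigma : nat -> 'I_k.+1) nuG nuH :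
  wl_determined d a -> 0 < x <= k.+1 -> vars_in k.+1 a -> wl_agree d.+1 G vs u H vs' u' ->
  (forall y, free a y -> y != x ->
     nuG y = ext vs u (sigma y) /\ nuH y = ext vs' u' (sigma y)) ->
  perm_eq (map (fun v => eval G (upd nuG x v) a) (enum 'I_n))
          (map (fun v => eval H (upd nuH x v) a) (enum 'I_n)).
Proof.
move=> a_det x_in a_vars agree points.
have [p p_unused] := exists_unused_entry sigma x_in.
have [labelsE label_agree] := wl_agree_drop_entry p agree.
apply: (perm_map_of_keys _ labelsE) => v v' /label_agree agree'.
apply: (a_det _ _ _ _ _ _ _ _ _ agree') => y ya.
have unused := p_unused y (vars_in_free a_vars ya).
by split; apply: upd_ext_drop_entry unused => yx; have [] := points y ya yx.
Qed.

Lemma wl_determined_guarded d i j a G H vs u vs' u' (sigma : nat -> 'I_k.+1) nuG nuH :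
  wl_determined d a -> (forall y, free a y -> y = j) -> wl_agree d.+1 G vs u H vs' u' ->
  nuG i = ext vs u (sigma i) -> nuH i = ext vs' u' (sigma i) ->
  perm_eq (map (fun v => eval G (upd nuG j v) a) (filter (adj G (nuG i)) (enum 'I_n)))
          (map (fun v => eval H (upd nuH j v) a) (filter (adj H (nuH i)) (enum 'I_n))).
Proof.
move=> a_det a_free agree iG iH.
have [|p] := @exists_notin _ [:: sigma i]; first by rewrite card_ord ltnS.
rewrite mem_seq1 eq_sym => i_unused.
have [labelsE label_agree] := wl_agree_drop_entry p agree.
apply: (perm_map_filter_of_keys _ labelsE) => v v' /label_agree[atpE wlE]; split.
  have := atp_eq_adj (tperm p ord_max (sigma i)) (tperm p ord_max p) atpE.
  by rewrite !ext_drop_entry (negbTE i_unused) eqxx -iG -iH.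
move=> _; apply: (a_det _ _ _ _ _ _ (fun _ => ord_max) _ _ (conj atpE wlE)) => y /a_free->.
by rewrite /upd eqxx !ext_max.
Qed.

End WLInvariant.

Lemma tl_wl_determined n l k (Omega : forall p : nat, (('I_p -> R) -> R) -> Prop)
    (Theta : (rmset -> R) -> Prop) (e : expr l) :
  0 < k -> in_TL Omega Theta e -> vars_in k.+1 e -> forall d, depth e <= d -> wl_determined n k d e.
Proof.
move=> k_gt0.
elim: e => [i j|i j|i j|s i|a IHa b IHb|a IHa b IHb|c a IHa|p f args IH|x a IHa|F j a IHa
  |F i j a IHa] /= e_TL e_vars d e_depth G H vs u vs' u' sigma nuG nuH agree points /=.
1-3: (case: (points i) => [|-> ->]; first by rewrite /= eqxx);
     case: (points j) => [|-> ->]; first by rewrite /= eqxx orbT.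
1,2: by rewrite (atp_eq_vertex _ _ agree.1).
- by rewrite (atp_eq_adj _ _ agree.1).
- by case: (points i) => [|-> ->]; rewrite /= ?eqxx ?(atp_eq_col _ agree.1).
- move: e_TL e_vars e_depth => [a_TL b_TL] /andP[a_vars b_vars].
  rewrite geq_max => /andP[a_depth b_depth].
  by congr Rmult; [apply: (wl_determined_sub (IHa a_TL a_vars d a_depth) agree points)
                  | apply: (wl_determined_sub (IHb b_TL b_vars d b_depth) agree points)] => y /= ->;
    rewrite ?orbT.
- move: e_TL e_vars e_depth => [a_TL b_TL] /andP[a_vars b_vars].
  rewrite geq_max => /andP[a_depth b_depth].
  by congr Rplus; [apply: (wl_determined_sub (IHa a_TL a_vars d a_depth) agree points)
                  | apply: (wl_determined_sub (IHb b_TL b_vars d b_depth) agree points)] => y /= ->;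
    rewrite ?orbT.
- by congr Rmult; apply: (wl_determined_sub (IHa e_TL e_vars d e_depth) agree points).
- move: e_TL e_vars => [_ args_TL] /forallP args_vars.
  congr f; apply: functional_extensionality => m.
  have args_depth := leq_trans (depth_EApp f args m) e_depth.
  apply: (wl_determined_sub (IH m (args_TL m) (args_vars m) d args_depth) agree points) => y ym.
  by apply/existsP; exists m.
- move: e_vars => /andP[x_in a_vars]; case: d e_depth agree => [//|d] a_depth agree.
  apply: eq_big_perm_map; rewrite !filter_predT.
  apply: (wl_determined_bind (IHa e_TL a_vars d a_depth) x_in a_vars agree) => y ya yx.
  by apply: points; rewrite /= yx.
- move: e_TL e_vars => [_ a_TL] /andP[j_in a_vars]; case: d e_depth agree => [//|d] a_depth agree.
  congr F; apply/eq_seq_msetP.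
  apply: (wl_determined_bind (IHa a_TL a_vars d a_depth) j_in a_vars agree) => y ya yj.
  by apply: points; rewrite /= yj.
- move: e_TL e_vars => [_ [a_free a_TL]] /and3P[_ _ a_vars].
  case: d e_depth agree => [//|d] a_depth agree.
  congr F; apply/eq_seq_msetP; have [iG iH] := points i (eqxx i).
  exact: (wl_determined_guarded k_gt0 (IHa a_TL a_vars d a_depth) a_free agree iG iH).
Qed.

Section DiagonalTuples.
Variables n l k : nat.
Hypothesis k_gt0 : 0 < k.
Implicit Types (G H : graph n l).

Lemma wl_agree_vwl G H d v w : vwl G k d v = vwl H k d w ->
  wl_agree d G [ffun _ : 'I_k => v] v H [ffun _ => w] w.
Proof.
move=> vwlE; split=> [|p]; last by rewrite !drop_entry_const.
have := atp_eq_col (Ordinal k_gt0) (wl_eq_atp vwlE); rewrite !ffunE => colE.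
by rewrite (atp_const G (ext_const v)) (atp_const H (ext_const w)) colE.
Qed.

Lemma eval_eq_of_vwl Omega Theta (e : expr l) x d :
  in_TL Omega Theta e -> vars_in k.+1 e -> depth e <= d -> (forall y, free e y -> y = x) ->
  forall G H v w nuG nuH, vwl G k d v = vwl H k d w -> nuG x = v -> nuH x = w ->
  eval G nuG e = eval H nuH e.
Proof.
move=> e_TL e_vars e_depth e_free G H v w nuG nuH vwlE xG xH.
apply: (tl_wl_determined (sigma := fun _ => ord0) k_gt0 e_TL e_vars e_depth (wl_agree_vwl vwlE)).
by move=> y /e_free->; rewrite !ext_const.
Qed.

Definition diagonal (vs : {ffun 'I_k -> 'I_n}) := [forall i, forall j, vs i == vs j].

Lemma perm_diagonal_tuples :
  perm_eq (map (fun v => [ffun _ : 'I_k => v]) (enum 'I_n))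
          (filter diagonal (enum {ffun 'I_k -> 'I_n})).
Proof.
pose o := Ordinal k_gt0.
apply: uniq_perm.
- by rewrite map_inj_uniq ?enum_uniq // => v w /ffunP/(_ o); rewrite !ffunE.
- exact/filter_uniq/enum_uniq.
move=> vs; rewrite mem_filter mem_enum andbT; apply/mapP/idP => [[v _ ->]|diag].
  by apply/forallP => i; apply/forallP => j; rewrite !ffunE.
exists (vs o); first by rewrite mem_enum.
by apply/ffunP => i; rewrite ffunE; apply/eqP/(forallP (forallP diag i) o).
Qed.

Lemma perm_vwl_of_gwl G H d : gwl G k d = gwl H k d ->
  perm_eq (map (vwl G k d) (enum 'I_n)) (map (vwl H k d) (enum 'I_n)).
Proof.
move/eq_seq_msetP => wlE.
have diagE : perm_eq (map (wl G d) (filter diagonal (enum {ffun 'I_k -> 'I_n})))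
                     (map (wl H d) (filter diagonal (enum {ffun 'I_k -> 'I_n}))).
  apply: (perm_map_filter_of_keys _ wlE) => a b /[dup] ab /wl_eq_atp atpE; split=> //.
  by apply: eq_forallb => i; apply: eq_forallb => j; apply: atp_eq_vertex atpE.
have vwl_diagonal (G' : graph n l) : map (vwl G' k d) (enum 'I_n) =
    map (wl G' d) (map (fun v => [ffun _ : 'I_k => v]) (enum 'I_n)).
  by elim: (enum 'I_n) => //= v s ->.
rewrite !vwl_diagonal (permPl (perm_map _ perm_diagonal_tuples)).
by rewrite (permPr (perm_map _ perm_diagonal_tuples)).
Qed.

End DiagonalTuples.

Lemma eval_closed_eq_of_perm_vwl n l k Omega Theta (G H : graph n l) d : 0 < k ->
  perm_eq (map (vwl G k d) (enum 'I_n)) (map (vwl H k d) (enum 'I_n)) ->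
  forall e : expr l, in_TL Omega Theta e -> vars_in k.+1 e -> depth e <= d.+1 ->
  (forall x, ~~ free e x) -> forall nuG nuH, eval G nuG e = eval H nuH e.
Proof.
move=> k_gt0 vwlE.
have body_eq x a : in_TL Omega Theta a -> vars_in k.+1 a -> depth a <= d ->
    (forall y, ~~ free (ESum x a) y) -> forall nuG nuH,
    perm_eq (map (fun v => eval G (upd nuG x v) a) (enum 'I_n))
            (map (fun v => eval H (upd nuH x v) a) (enum 'I_n)).
  move=> a_TL a_vars a_depth closed nuG nuH.
  have a_free y : free a y -> y = x.
    by move=> ya; apply/eqP; apply: contraNT (closed y) => yx; rewrite /= yx ya.
  apply: (perm_map_of_keys _ vwlE) => v w vwE.
  by apply: (eval_eq_of_vwl k_gt0 a_TL a_vars a_depth a_free vwE); rewrite /upd eqxx.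
elim=> [i j|i j|i j|s i|a IHa b IHb|a IHa b IHb|c a IHa|p f args IH|x a IHa|F j a IHa|F i j a IHa]
  /= e_TL e_vars e_depth closed nuG nuH; try by have := closed i; rewrite /= eqxx.
- move: e_TL e_vars e_depth => [a_TL b_TL] /andP[a_vars b_vars].
  rewrite geq_max => /andP[a_depth b_depth].
  by congr Rmult; [apply: IHa | apply: IHb] => // y;
    apply: contraNN (closed y) => /= ->; rewrite ?orbT.
- move: e_TL e_vars e_depth => [a_TL b_TL] /andP[a_vars b_vars].
  rewrite geq_max => /andP[a_depth b_depth].
  by congr Rplus; [apply: IHa | apply: IHb] => // y;
    apply: contraNN (closed y) => /= ->; rewrite ?orbT.
- by congr Rmult; apply: IHa.
- move: e_TL e_vars => [_ args_TL] /forallP args_vars.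
  congr f; apply: functional_extensionality => m.
  apply: IH; rewrite ?(leq_trans (depth_EApp f args m)) // => y.
  by apply: contraNN (closed y) => ym; apply/existsP; exists m.
- move: e_vars => /andP[_ a_vars].
  by apply: eq_big_perm_map; rewrite !filter_predT; apply: body_eq.
- move: e_TL e_vars => [_ a_TL] /andP[_ a_vars].
  by congr F; apply/eq_seq_msetP; apply: (body_eq j).
Qed.

Section Guarded.
Variables n l : nat.
Variable Omega : forall p : nat, (('I_p -> R) -> R) -> Prop.
Variable Theta : (rmset -> R) -> Prop.
Implicit Types (G H : graph n l).

Lemma gtl_free i (e : expr l) : gtl Omega Theta i e -> free e i.
Proof.
elim=> {i e} [i _|i _|s i _|i a b _ IHa _ _|i a b _ IHa _ _|i c a _ IHa|i p f args p_gt0 _ _ IH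
  |i j a ij _ _|i j F a ij _ _ _] /=;
  rewrite ?eqxx ?IHa //.
- by apply/existsP; exists (Ordinal p_gt0).
- by case/orP: ij => /andP[/eqP-> /eqP->].
Qed.

Lemma eval_guarded_sum G nu i j (a : expr l) : i != j ->
  eval G nu (ESum j (EMul (EE l i j) a)) =
  \big[Rplus/R0]_(v | adj G (nu i) v) eval G (upd nu j v) a.
Proof.
move=> ij; rewrite /= [RHS]big_mkcond; apply: eq_bigr => v _.
by rewrite /upd eqxx (negbTE ij) /ind; case: adj; [apply: Rmult_1_l | apply: Rmult_0_l].
Qed.

Lemma cr_succ_eq G H d v w : cr G d.+1 v = cr H d.+1 w ->
  cr G d v = cr H d w /\
  perm_eq (map (cr G d) (filter (adj G v) (enum 'I_n)))
          (map (cr H d) (filter (adj H w) (enum 'I_n))).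
Proof. by case=> -> /eq_seq_msetP. Qed.

Lemma gtl_eval_eq_of_cr i (e : expr l) : gtl Omega Theta i e -> forall d, depth e <= d ->
  forall G H nuG nuH, cr G d (nuG i) = cr H d (nuH i) -> eval G nuG e = eval H nuH e.
Proof.
elim=> {i e} [i _|i _|s i _|i a b _ IHa _ IHb|i a b _ IHa _ IHb|i c a _ IHa|i p f args _ _ _ IH
  |i j a ij _ IHa|i j F a ij _ _ IHa] d e_depth G H nuG nuH crE.
1,2: by rewrite /= !eqxx.
- by rewrite /= (cr_eq_col crE).
- move: e_depth; rewrite /= geq_max => /andP[a_depth b_depth].
  by rewrite (IHa d a_depth _ _ _ _ crE) (IHb d b_depth _ _ _ _ crE).
- move: e_depth; rewrite /= geq_max => /andP[a_depth b_depth].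
  by rewrite (IHa d a_depth _ _ _ _ crE) (IHb d b_depth _ _ _ _ crE).
- by rewrite /= (IHa d e_depth _ _ _ _ crE).
- rewrite /=; congr f; apply: functional_extensionality => m.
  exact: (IH m d (leq_trans (depth_EApp f args m) e_depth) _ _ _ _ crE).
- case: d e_depth crE => [//|d] e_depth /cr_succ_eq[_ nbrsE].
  have a_depth : depth a <= d by move: e_depth; rewrite /= max0n.
  have i_neq_j : i != j by case/orP: ij => /andP[/eqP-> /eqP->].
  rewrite !eval_guarded_sum //; apply: eq_big_perm_map.
  by apply: (perm_map_of_keys _ nbrsE) => v w vwE; apply: (IHa d a_depth); rewrite /upd eqxx.
- case: d e_depth crE => [//|d] /= a_depth /cr_succ_eq[_ nbrsE].
  congr F; apply/eq_seq_msetP.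
  by apply: (perm_map_of_keys _ nbrsE) => v w vwE; apply: (IHa d a_depth); rewrite /upd eqxx.
Qed.

End Guarded.

Theorem mainTheorem15 (n l : nat) (Hn : (0 < n)%N) (Hl : (0 < l)%N)
  (t k : nat) (Hk : (0 < k)%N)
  (Omega : forall p : nat, (('I_p -> R) -> R) -> Prop)
  (Theta : (rmset -> R) -> Prop) :
  (forall (G H : graph n l) (v w : 'I_n),
     cr G t v = cr H t w ->
     rho1 (GTL2 Omega Theta t) G v H w) /\
  (forall (G H : graph n l) (v w : 'I_n),
     vwl G k t v = vwl H k t w ->
     rho1 (TL Omega Theta k.+1 t) G v H w) /\
  (forall (G H : graph n l),
     gwl G k t = gwl H k t ->
     rho0 (TL Omega Theta k.+1 t.+1) G H).
Proof.
split; [|split].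
- move=> G H v w crE phi [i [phi_gtl phi_depth]] phi_free nuG nuH vG wH.
  have i1 := phi_free i (gtl_free phi_gtl); subst i.
  by apply: (gtl_eval_eq_of_cr phi_gtl phi_depth); rewrite vG wH.
- move=> G H v w vwlE phi [phi_TL [phi_vars phi_depth]] phi_free nuG nuH.
  exact: (eval_eq_of_vwl Hk phi_TL phi_vars phi_depth phi_free vwlE).
- move=> G H gwlE phi [phi_TL [phi_vars phi_depth]] phi_closed nuG nuH.
  have vwlE := perm_vwl_of_gwl Hk gwlE.
  exact: (eval_closed_eq_of_perm_vwl Hk vwlE phi_TL phi_vars phi_depth phi_closed).
Qed.
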